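(* The morphism $\mathscr E\to\mathscr X$ induced by $\pi$ is a birational equivalence.
   Context: Let $V_1,\dots,V_n$ be two-dimensional complex vector spaces, $\mathscr V_i=\mathfrak{sl}(V_i)$ with form $\langle A,B\rangle=\tfrac12\operatorname{tr}(AB)$, $\mathscr L$ the affine space of trace-one endomorphisms of $V_1\otimes\cdots\otimes V_n$, identified (Bloch model) with $\bigoplus_{\emptyset\ne I\subseteq\{1,\dots,n\}}\mathscr V_I$, $\mathscr V_I=\bigotimes_{i\in I}\mathscr V_i$, via $\rho=2^{-n}\mathrm{id}+\sum_I\rho_I$ (with $\mathscr V_I$ embedded by tensoring with identities). An X-state is a $\rho\in\mathscr L$ which for some ordered bases $\{e^i_0,e^i_1\}$ of the $V_i$ preserves the span of basis tensors $e^1_{\phi(1)}\otimes\cdots\otimes e^n_{\phi(n)}$ with $\sum\phi(i)$ even and the span of those with $\sum\phi(i)$ odd; $\mathscr X$ is the Zariski closure of the set of X-states with reduced structure. Let $\breve P=\prod_i\breve{\mathbb P}(\mathscr V_i)$, with $\breve{\mathbb P}(\mathscr V_i)$ the open set of lines spanned by $v$ with $\langle v,v\rangle\ne0$. For $\mathfrak B=(\mathscr V_1^\ell,\dots,\mathscr V_n^\ell)\in\breve P$, $\mathscr V_i^t=(\mathscr V_i^\ell)^\perp$, $\mathscr V_I^e$ is spanned by tensors $\bigotimes_{i\in I}x_i$ with each $x_i\in\mathscr V_i^\ell$ or $\mathscr V_i^t$ and an even number transversal, and $X(\mathfrak B)=\bigoplus_{\emptyset\ne I}\mathscr V_I^e$.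 $\mathscr E\to\breve P$ is the vector subbundle of $\breve P\times\mathscr L$ with fiber $X(\mathfrak B)$ over $\mathfrak B$, and $\pi:\mathscr E\to\mathscr L$ is the projection, whose image lies in $\mathscr X$. *)

From HB Require Import structures.
From mathcomp Require Import all_boot all_order all_algebra.
From mathcomp Require Import reals complex mpoly.
Import GRing.Theory Num.Theory.

Set Implicit Arguments.
Unset Strict Implicit.
Unset Printing Implicit Defensive.

Local Open Scope ring_scope.

(* Conventions:
   - V_i = C^2, so End(V_1 (x) ... (x) V_n) = 'M[C]_(2^n); the standard basis
     vector with index j : 'I_(2^n) is the tensor e_{bit j 0} (x) ... (x)
     e_{bit j (n-1)}.
   - sl(V_i) = traceless 2x2 matrices, <A,B> = tr(AB)/2.
   - A point of P-breve is represented by a vector v in sl2 with <v,v> <> 0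
     (the line is span v). *)

Section Defs.
Variable C : fieldType.
Variable n : nat.

Definition bit (j : 'I_(2 ^ n)) (i : 'I_n) : 'I_2 := inord ((j %/ 2 ^ i) %% 2).

Definition parity (j : 'I_(2 ^ n)) : bool := odd (\sum_(i < n) (bit j i : nat)).

Definition tens (B : 'I_n -> 'M[C]_2) : 'M[C]_(2 ^ n) :=
  \matrix_(j, k) \prod_(i < n) B i (bit j i) (bit k i).

Definition in_sl2 (A : 'M[C]_2) : Prop := \tr A = 0.
Definition bform (A B : 'M[C]_2) : C := \tr (A *m B) / 2%:R.

Definition Pbreve_rep (v : 'M[C]_2) : Prop := in_sl2 v /\ bform v v != 0.

Definition longit (v x : 'M[C]_2) : Prop := exists c : C, x = c *: v.
Definition transv (v x : 'M[C]_2) : Prop := in_sl2 x /\ bform v x = 0.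

(* generators of X(B) = (+)_{I nonempty} V_I^e, embedded in End(V) by
   tensoring with identities *)
Definition Xgen (b : 'I_n -> 'M[C]_2) (T : 'M[C]_(2 ^ n)) : Prop :=
  exists (I : {set 'I_n}) (t : 'I_n -> bool) (x : 'I_n -> 'M[C]_2),
    [/\ I != set0,
        ~~ odd #|[set i in I | t i]|,
        (forall i, i \notin I -> x i = 1%:M),
        (forall i, i \in I -> if t i then transv (b i) (x i)
                              else longit (b i) (x i))
      & T = tens x].

Definition inspan (P : 'M[C]_(2 ^ n) -> Prop) (T : 'M[C]_(2 ^ n)) : Prop :=
  exists s : seq (C * 'M[C]_(2 ^ n)),
    (forall p, p \in s -> P p.2) /\ T = \sum_(p <- s) p.1 *: p.2.

Definition Xfib (b : 'I_n -> 'M[C]_2) : 'M[C]_(2 ^ n) -> Prop := inspan (Xgen b).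

(* the Bloch part sum_I rho_I = rho - 2^{-n} id *)
Definition bloch (rho : 'M[C]_(2 ^ n)) : 'M[C]_(2 ^ n) :=
  rho - (2 ^ n)%:R^-1 *: 1%:M.

(* (b, rho) represents a point (B, rho) of the bundle E (B = (span b_i)_i) *)
Definition in_E (b : 'I_n -> 'M[C]_2) (rho : 'M[C]_(2 ^ n)) : Prop :=
  [/\ forall i, Pbreve_rep (b i), \tr rho = 1 & Xfib b (bloch rho)].

(* X-states: trace one, and for some bases (columns of invertible g_i) rho
   maps each basis tensor into the span of the basis tensors of the same
   parity (i.e. preserves the even span and the odd span) *)
Definition is_Xstate (rho : 'M[C]_(2 ^ n)) : Prop :=
  \tr rho = 1 /\
  exists g : 'I_n -> 'M[C]_2,
    (forall i, g i \in unitmx) /\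
    forall j : 'I_(2 ^ n), exists c : 'I_(2 ^ n) -> C,
      rho *m col j (tens g) =
        \sum_(k < 2 ^ n | parity k == parity j) c k *: col k (tens g).

Definition coordL (rho : 'M[C]_(2 ^ n)) : 'I_(2 ^ n * 2 ^ n) -> C :=
  fun j => mxvec rho 0 j.
Definition polyL (p : {mpoly C[2 ^ n * 2 ^ n]}) (rho : 'M[C]_(2 ^ n)) : C :=
  p.@[coordL rho].

(* the Zariski closure X of the set of X-states (closed points) *)
Definition in_X (rho : 'M[C]_(2 ^ n)) : Prop :=
  forall p, (forall s, is_Xstate s -> polyL p s = 0) -> polyL p rho = 0.

Definition coordE (b : 'I_n -> 'M[C]_2) (rho : 'M[C]_(2 ^ n))
  : 'I_(n * (2 * 2) + 2 ^ n * 2 ^ n) -> C :=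
  fun j => row_mx (mxvec (\matrix_(i < n) mxvec (b i))) (mxvec rho) 0 j.
Definition polyE (F : {mpoly C[n * (2 * 2) + 2 ^ n * 2 ^ n]})
  (b : 'I_n -> 'M[C]_2) (rho : 'M[C]_(2 ^ n)) : C :=
  F.@[coordE b rho].

Definition ratmap (pb : 'I_n -> 'I_2 -> 'I_2 -> {mpoly C[2 ^ n * 2 ^ n]})
  (q : {mpoly C[2 ^ n * 2 ^ n]}) (rho : 'M[C]_(2 ^ n)) (i : 'I_n) : 'M[C]_2 :=
  \matrix_(a, a') (polyL (pb i a a') rho / polyL q rho).

End Defs.

From HB Require Import structures.
From mathcomp Require Import all_boot all_order all_algebra.
From mathcomp Require Import reals complex mpoly ring.
From mathcomp Require boolp.
Import GRing.Theory Num.Theory.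
Local Open Scope ring_scope.
Set Implicit Arguments.
Unset Strict Implicit.
Unset Printing Implicit Defensive.

(* The inverse of pi sends rho to the lines spanned by its traceless one-site
   marginals rho_i (partial traces of rho - 2^-n id); it is a rational map,
   regular where q(rho) = prod_i <rho_i, rho_i> does not vanish.  It inverts pi
   because, for nondegenerate b_i, X(B) is exactly the space of traceless
   operators commuting with b = b_1 (x) ... (x) b_n: conjugation by b fixes the
   identity and the line of b_i in each factor and negates the transversal
   plane, so on a product of such factors it acts by (-1)^#transversal.  Hence
   the marginals of a point of X(B) lie on the lines of B; conversely an X-state
   commutes with the tensor product of its marginals (after a change of bases
   both are block diagonal for the parity, the latter even scalar on each
   block), and this polynomial identity persists on the closure X.  Finally,
   every X-state, resp. every point of E, is joined by a line of X-states, resp.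
   of points of E over the same B, to a point where q does not vanish, and a
   polynomial vanishing on that line off the zeros of q vanishes on all of it;
   so the loci where q does not vanish are dense in X and in E. *)

Lemma binary_expansion m j : (j < 2 ^ m)%N ->
  j = (\sum_(i < m) (j %/ 2 ^ i %% 2) * 2 ^ i)%N.
Proof.
elim: m j => [|m IH] j hj; first by rewrite big_ord0; case: j hj.
rewrite big_ord_recl /= expn0 divn1 muln1.
have hj2 : (j %/ 2 < 2 ^ m)%N by rewrite ltn_divLR // -expnSr.
rewrite {1}(divn_eq j 2) {1}(IH _ hj2) addnC big_distrl /=; congr (_ + _)%N.
apply: eq_bigr => i _.
by rewrite /bump /= add1n expnS -divnMA [(2 * 2 ^ i)%N]mulnC mulnA.
Qed.

Section MatrixFacts.
Variable R : comPzRingType.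

Lemma mxtrace_mul_delta m (X : 'M[R]_m) a b : \tr (X *m delta_mx a b) = X b a.
Proof.
rewrite /mxtrace (bigD1 b) //= big1 => [|c /negPf hc]; last first.
  by rewrite mxE big1 // => d _; rewrite mxE hc andbF mulr0.
rewrite addr0 mxE (bigD1 a) //= big1 => [|d /negPf hd]; last by rewrite mxE hd mulr0.
by rewrite mxE !eqxx mulr1 addr0.
Qed.

Lemma eq_mx_mxtrace_mul m (M N : 'M[R]_m) :
  (forall X, \tr (M *m X) = \tr (N *m X)) -> M = N.
Proof. by move=> e; apply/matrixP => a b; rewrite -!mxtrace_mul_delta e. Qed.

Lemma mul_col_sum m p q (G : 'M[R]_(m, p)) (D : 'M[R]_(p, q)) j :
  G *m col j D = \sum_k D k j *: col k G.
Proof.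
apply/matrixP => r c; rewrite !mxE summxE; apply: eq_bigr => k _.
by rewrite !mxE mulrC.
Qed.

End MatrixFacts.

Section Bits.
Variable n : nat.

Definition bits (j : 'I_(2 ^ n)) : {ffun 'I_n -> 'I_2} := [ffun i => bit j i].

Lemma bits_inj : injective bits.
Proof.
move=> j k /ffunP ejk; apply: ord_inj.
rewrite (binary_expansion (ltn_ord j)) (binary_expansion (ltn_ord k)).
apply: eq_bigr => i _; have := congr1 val (ejk i).
by rewrite !ffunE /bit /= !inordK ?ltn_pmod // => ->.
Qed.

Lemma reindex_bits (R : nmodType) (F : {ffun 'I_n -> 'I_2} -> R) :
  \sum_(j < 2 ^ n) F (bits j) = \sum_f F f.
Proof.
rewrite (reindex bits) //; apply/onW_bij/(inj_card_bij bits_inj).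
by rewrite card_ffun !card_ord.
Qed.

Lemma prod_eq_bits (R : comPzSemiRingType) (u v : 'I_(2 ^ n)) :
  \prod_i ((bits u i == bits v i)%:R : R) = (u == v)%:R.
Proof.
case: (pickP (fun i => bits u i != bits v i)) => [i hi | h].
  rewrite (bigD1 i) //= (negPf hi) mul0r.
  by case: eqP => // euv; rewrite euv eqxx in hi.
have -> : u = v by apply/bits_inj/ffunP => i; apply/eqP/negbFE/h.
by rewrite eqxx big1 // => i _; rewrite eqxx.
Qed.

End Bits.

Section Tensor.
Variables (C : fieldType) (n : nat).
Implicit Types (x z : 'I_n -> 'M[C]_2) (y : 'M[C]_2) (A : 'M[C]_(2 ^ n)).

Lemma tensE x j k : tens x j k = \prod_i x i (bits j i) (bits k i).
Proof. by rewrite mxE; apply: eq_bigr => i _; rewrite !ffunE. Qed.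

Lemma eq_tens x z : x =1 z -> tens x = tens z.
Proof.
by move=> e; apply/matrixP => j k; rewrite !tensE; apply: eq_bigr => i _; rewrite e.
Qed.

Lemma mul_tens x z : tens x *m tens z = tens (fun i => x i *m z i).
Proof.
apply/matrixP => j k; rewrite tensE mxE.
under [RHS]eq_bigr do rewrite mxE.
rewrite bigA_distr_bigA /= -reindex_bits.
by apply: eq_bigr => l _; rewrite !tensE -big_split.
Qed.

Lemma mxtrace_tens x : \tr (tens x) = \prod_i \tr (x i).
Proof.
rewrite /mxtrace bigA_distr_bigA /= -(reindex_bits (fun f => \prod_i x i (f i) (f i))).
by apply: eq_bigr => j _; rewrite tensE.
Qed.

Lemma tens_delta (j k : 'I_(2 ^ n)) :
  tens (fun i => delta_mx (bits j i) (bits k i)) = delta_mx j k :> 'M[C]_(2 ^ n).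
Proof.
apply/matrixP => u v; rewrite tensE mxE.
under eq_bigr do rewrite mxE -mulnb natrM.
by rewrite big_split /= !prod_eq_bits -natrM mulnb.
Qed.

Lemma tens1 : tens (fun _ => 1%:M) = 1%:M :> 'M[C]_(2 ^ n).
Proof.
apply/matrixP => j k; rewrite tensE [RHS]mxE -(prod_eq_bits C).
by apply: eq_bigr => i _; rewrite mxE.
Qed.

Lemma tensZ (c : 'I_n -> C) x :
  tens (fun i => c i *: x i) = (\prod_i c i) *: tens x.
Proof.
apply/matrixP => j k; rewrite [RHS]mxE !tensE -big_split /=.
by apply: eq_bigr => i _; rewrite mxE.
Qed.

Lemma tens_sum (I : finType) (F : 'I_n -> I -> 'M[C]_2) :
  tens (fun i => \sum_c F i c) = \sum_(t : {ffun 'I_n -> I}) tens (fun i => F i (t i)).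
Proof.
apply/matrixP => j k; rewrite tensE summxE.
under eq_bigr do rewrite summxE.
by rewrite bigA_distr_bigA; apply: eq_bigr => t _; rewrite tensE.
Qed.

Lemma tens_is_diag x :
  (forall i, is_diag_mx (x i)) -> is_diag_mx (tens x).
Proof.
move=> hx; apply/is_diag_mxP => u v /eqP uv; rewrite tensE.
have [i ui | same] := pickP (fun i => bits u i != bits v i).
  by rewrite (bigD1 i) //= (is_diag_mxP (hx i)) ?mul0r.
by case: uv; congr val; apply/bits_inj/ffunP => i; apply/eqP/negbFE/same.
Qed.

Definition tens_conj (g : 'I_n -> 'M[C]_2) A : 'M[C]_(2 ^ n) :=
  tens g *m A *m tens (fun i => invmx (g i)).

Fact tens_conj_is_linear g : linear (tens_conj g).
Proof.
by move=> a A B; rewrite /tens_conj mulmxDr mulmxDl -scalemxAr -scalemxAl.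
Qed.
HB.instance Definition _ g := GRing.isLinear.Build C 'M[C]_(2 ^ n) 'M[C]_(2 ^ n) _
  (tens_conj g) (tens_conj_is_linear g).

Section Invertible.
Variable g : 'I_n -> 'M[C]_2.
Hypothesis g_unit : forall i, g i \in unitmx.

Lemma mul_tens_invmx : tens g *m tens (fun i => invmx (g i)) = 1%:M.
Proof. by rewrite mul_tens -tens1; apply: eq_tens => i; rewrite mulmxV. Qed.

Lemma mul_invmx_tens : tens (fun i => invmx (g i)) *m tens g = 1%:M.
Proof. by rewrite mul_tens -tens1; apply: eq_tens => i; rewrite mulVmx. Qed.

Lemma tens_conj1 : tens_conj g 1%:M = 1%:M.
Proof. by rewrite /tens_conj mulmx1 mul_tens_invmx. Qed.

Lemma tens_conjM A B : tens_conj g A *m tens_conj g B = tens_conj g (A *m B).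
Proof.
rewrite /tens_conj !mulmxA -[_ *m tens (fun i => invmx (g i)) *m tens g]mulmxA.
by rewrite mul_invmx_tens mulmx1.
Qed.

Lemma mxtrace_tens_conj A : \tr (tens_conj g A) = \tr A.
Proof. by rewrite /tens_conj mxtrace_mulC mulmxA mul_invmx_tens mul1mx. Qed.

End Invertible.

Definition embed (i : 'I_n) (y : 'M[C]_2) : 'M[C]_(2 ^ n) :=
  tens (fun l => if l == i then y else 1%:M).

Lemma embedE i y j k : embed i y j k =
  y (bits j i) (bits k i) * \prod_(l | l != i) (1%:M : 'M[C]_2) (bits j l) (bits k l).
Proof.
rewrite tensE (bigD1 i) //= eqxx; congr (_ * _).
by apply: eq_bigr => l /negPf ->.
Qed.

Fact embed_is_linear i : linear (embed i).
Proof.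
move=> a u v; apply/matrixP => j k.
rewrite [RHS]mxE [(a *: embed i u) _ _]mxE !embedE.
by rewrite [(a *: u + v) _ _]mxE [(a *: u) _ _]mxE mulrDl mulrA.
Qed.
HB.instance Definition _ i :=
  GRing.isLinear.Build C 'M[C]_2 'M[C]_(2 ^ n) _ (embed i) (embed_is_linear i).

Lemma embed1 i : embed i 1%:M = 1%:M.
Proof. by rewrite -tens1; apply: eq_tens => l; case: ifP. Qed.

(* The partial trace over all factors but the i-th, characterised by
   [mxtrace_mul_embed]. *)
Definition ptrace i A : 'M[C]_2 :=
  \matrix_(a, a') \tr (A *m embed i (delta_mx a' a)).

Fact ptrace_is_linear i : linear (ptrace i).
Proof.
move=> c A B; apply/matrixP => a a'.
by rewrite !mxE mulmxDl -scalemxAl mxtraceD mxtraceZ.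
Qed.
HB.instance Definition _ i :=
  GRing.isLinear.Build C 'M[C]_(2 ^ n) 'M[C]_2 _ (ptrace i) (ptrace_is_linear i).

Lemma mxtrace_mul_embed i A y : \tr (A *m embed i y) = \tr (ptrace i A *m y).
Proof.
rewrite [in LHS](matrix_sum_delta y) [in RHS](matrix_sum_delta y).
rewrite linear_sum !mulmx_sumr !raddf_sum; apply: eq_bigr => a _.
rewrite linear_sum !mulmx_sumr !raddf_sum; apply: eq_bigr => a' _.
by rewrite linearZ -!scalemxAr /= !mxtraceZ mxtrace_mul_delta mxE.
Qed.

Lemma mxtrace_ptrace i A : \tr (ptrace i A) = \tr A.
Proof. by rewrite -[ptrace i A]mulmx1 -mxtrace_mul_embed embed1 mulmx1. Qed.

Lemma ptrace_tens i x : ptrace i (tens x) = (\prod_(l | l != i) \tr (x l)) *: x i.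
Proof.
apply/matrixP => a a'; rewrite !mxE /embed mul_tens mxtrace_tens (bigD1 i) //= eqxx.
rewrite mxtrace_mul_delta mulrC; congr (_ * _).
by apply: eq_bigr => l /negPf ->; rewrite mulmx1.
Qed.

Lemma ptrace_embed i k y : \tr y = 0 ->
  ptrace i (embed k y) = if k == i then (2 ^ n.-1)%:R *: y else 0.
Proof.
move=> y0; rewrite ptrace_tens /=; case: (eqVneq k i) => [<- | ki].
  congr (_ *: _); under eq_bigr => l /negPf -> do rewrite mxtrace1.
  by rewrite prodr_const cardC1 card_ord natrX.
by rewrite (bigD1 k) //= eqxx y0 mul0r scale0r.
Qed.

Lemma ptrace_tens_conj i (g : 'I_n -> 'M[C]_2) A : (forall l, g l \in unitmx) ->
  ptrace i (tens_conj g A) = g i *m ptrace i A *m invmx (g i).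
Proof.
move=> hg; apply: eq_mx_mxtrace_mul => y.
have conj_embed : tens (fun l => invmx (g l)) *m embed i y *m tens g =
    embed i (invmx (g i) *m y *m g i).
  rewrite /embed !mul_tens; apply: eq_tens => l.
  by case: eqP => [->|_]; rewrite ?mulmx1 ?mulVmx.
rewrite -mxtrace_mul_embed /tens_conj.
transitivity (\tr (A *m (tens (fun l => invmx (g l)) *m embed i y *m tens g))).
  by rewrite -!mulmxA mxtrace_mulC !mulmxA.
by rewrite conj_embed mxtrace_mul_embed !mulmxA mxtrace_mulC !mulmxA.
Qed.

End Tensor.

Lemma big_ord2 (R : nmodType) (F : 'I_2 -> R) : \sum_(i < 2) F i = F ord0 + F ord_max.
Proof. by rewrite big_ord_recl big_ord1; congr (_ + F _); apply: val_inj. Qed.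

Lemma ord2P (r : 'I_2) : r = ord0 \/ r = ord_max.
Proof. by case: r => [[|[|r]] hr] //; [left | right]; apply: val_inj. Qed.

Lemma big_option_bool (R : nmodType) (F : option bool -> R) :
  \sum_c F c = F None + F (Some true) + F (Some false).
Proof.
rewrite (bigD1 None) // (bigD1 (Some true)) // (big_pred1 (Some false)) /= ?addrA //.
by case=> [[]|].
Qed.

Section SL2.
Variable C : numFieldType.
Implicit Types b u v w y : 'M[C]_2.

Lemma mxtrace2 u : \tr u = u ord0 ord0 + u ord_max ord_max.
Proof. exact: big_ord2. Qed.

(* Cayley-Hamilton for traceless 2x2 matrices, polarised. *)
Lemma sl2_anticomm u v : in_sl2 u -> in_sl2 v ->
  u *m v + v *m u = \tr (u *m v) *: 1%:M.
Proof.
rewrite /in_sl2 !mxtrace2 => /eqP; rewrite addr_eq0 => /eqP hu.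
move/eqP; rewrite addr_eq0 => /eqP hv.
apply/matrixP => r c; rewrite !(mxE, big_ord2).
by case: (ord2P r) => ->; case: (ord2P c) => -> /=; rewrite hu hv; ring.
Qed.

Lemma mxtrace_mul_bform u v : \tr (u *m v) = 2%:R * bform u v.
Proof. by rewrite /bform mulrC mulfVK ?pnatr_eq0. Qed.

Lemma sl2_sqr b : in_sl2 b -> b *m b = bform b b *: 1%:M.
Proof.
move=> hb; apply: (@scalerI _ _ (2%:R : C)); first by rewrite pnatr_eq0.
by rewrite scalerA -mxtrace_mul_bform -sl2_anticomm // scaler_nat mulr2n.
Qed.

Lemma transv_conj b w : in_sl2 b -> transv b w -> b *m w *m b = - bform b b *: w.
Proof.
move=> hb [hw hbw]; have := sl2_anticomm hb hw.
rewrite mxtrace_mul_bform hbw mulr0 scale0r => /eqP; rewrite addr_eq0 => /eqP ->.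
by rewrite mulNmx -mulmxA sl2_sqr // -scalemxAr mulmx1 scaleNr.
Qed.

Lemma bformZZ c u v : bform (c *: u) (c *: v) = c ^+ 2 * bform u v.
Proof. by rewrite /bform -scalemxAl -scalemxAr !mxtraceZ !mulrA expr2. Qed.

Lemma bform_conj g u v : g \in unitmx ->
  bform (g *m u *m invmx g) (g *m v *m invmx g) = bform u v.
Proof.
move=> hg; rewrite /bform -!mulmxA [invmx g *m _]mulmxA mulVmx // mul1mx.
by rewrite mxtrace_mulC -!mulmxA mulVmx // mulmx1.
Qed.

Definition transv_part b y : 'M[C]_2 :=
  y - (\tr y / 2%:R) *: 1%:M - (bform b y / bform b b) *: b.

Lemma transv_partP b y : in_sl2 b -> bform b b != 0 -> transv b (transv_part b y).
Proof.
move=> hb hbb; split.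
  rewrite /in_sl2 /transv_part !linearB /= !mxtraceZ mxtrace1 hb mulr0 subr0.
  by rewrite mulfVK ?pnatr_eq0 // subrr.
rewrite {1}/bform /transv_part !mulmxBr -!scalemxAr mulmx1 !linearB /= !mxtraceZ hb.
by rewrite mulr0 subr0 !mxtrace_mul_bform [_ / _ * _]mulrCA mulfVK // subrr mul0r.
Qed.

(* The coordinates of a matrix along [1], the line of [b] and its transversal
   plane; [Some true] marks the transversal component. *)
Definition frame_coef b y (c : option bool) : C :=
  match c with
  | None => \tr y / 2%:R
  | Some false => bform b y / bform b b
  | Some true => 1
  end.

Definition frame_vec b y (c : option bool) : 'M[C]_2 :=
  match c with
  | None => 1%:M
  | Some false => b
  | Some true => transv_part b y
  end.

Lemma frame_decomp b y : \sum_c frame_coef b y c *: frame_vec b y c = y.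
Proof.
by rewrite big_option_bool /= scale1r /transv_part -addrA subrK addrC subrK.
Qed.

Lemma conj_frame_vec b y c : in_sl2 b -> bform b b != 0 ->
  b *m frame_vec b y c *m b =
  ((if c == Some true then -1 else 1) * bform b b) *: frame_vec b y c.
Proof.
move=> hb hbb; case: c => [[]|] /=.
- rewrite mulN1r transv_conj //; exact: transv_partP.
- by rewrite mul1r sl2_sqr // -scalemxAl mul1mx.
- by rewrite mul1r mulmx1 sl2_sqr.
Qed.

Definition sigma_z : 'M[C]_2 := \matrix_(a, a') ((a == a')%:R * (-1) ^+ a).

Lemma sigma_z_sl2 : in_sl2 sigma_z.
Proof. by rewrite /in_sl2 mxtrace2 !mxE /= expr0 expr1 !mul1r subrr. Qed.

Lemma sigma_z_sqr : sigma_z *m sigma_z = 1%:M.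
Proof.
apply/matrixP => a b; rewrite !mxE big_ord2 !mxE.
by case: (ord2P a) => ->; case: (ord2P b) => -> /=; rewrite ?expr1; ring.
Qed.

Lemma bform_sigma_z : bform sigma_z sigma_z = 1.
Proof. by rewrite /bform sigma_z_sqr mxtrace1 mulfV ?pnatr_eq0. Qed.

Lemma sigma_z_is_diag : is_diag_mx sigma_z.
Proof. by apply/is_diag_mxP => a b ab; rewrite mxE -val_eqE (negPf ab) mul0r. Qed.

Lemma diag_sl2 (M : 'M[C]_2) : M ord0 ord_max = 0 -> M ord_max ord0 = 0 ->
  \tr M = 0 -> M = M ord0 ord0 *: sigma_z.
Proof.
rewrite mxtrace2 => M01 M10 /eqP; rewrite addr_eq0 => /eqP M00.
apply/matrixP => a b; rewrite !mxE.
by case: (ord2P a) => ->; case: (ord2P b) => -> /=; rewrite ?M01 ?M10 ?M00; ring.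
Qed.

End SL2.

Lemma prodr_sign (R : comPzRingType) (I : finType) (P : pred I) :
  \prod_i (if P i then -1 else 1 : R) = (-1) ^+ #|P|.
Proof.
rewrite (bigID P) /= [X in _ * X]big1 ?mulr1 => [|i /negPf -> //].
by rewrite (eq_bigr (fun _ => -1)) ?prodr_const // => i ->.
Qed.

Section Span.
Variables (C : fieldType) (n : nat).
Implicit Types (P : 'M[C]_(2 ^ n) -> Prop) (A T : 'M[C]_(2 ^ n)).

Lemma inspan0 P : inspan P 0.
Proof. by exists [::]; rewrite big_nil. Qed.

Lemma inspan_gen P T : P T -> inspan P T.
Proof.
move=> hT; exists [:: (1, T)]; rewrite big_seq1 scale1r.
by split=> // p /[!inE] /eqP ->.
Qed.

Lemma inspanD P A T : inspan P A -> inspan P T -> inspan P (A + T).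
Proof.
move=> [s [hs ->]] [r [hr ->]]; exists (s ++ r); rewrite big_cat; split=> // p.
by rewrite mem_cat => /orP [/hs | /hr].
Qed.

Lemma inspanZ P c A : inspan P A -> inspan P (c *: A).
Proof.
move=> [s [hs ->]]; exists [seq (c * p.1, p.2) | p <- s]; split.
  by move=> p /mapP [p' /hs hp' ->].
by rewrite big_map scaler_sumr; apply: eq_bigr => p _; rewrite scalerA.
Qed.

Lemma inspan_sum P (I : Type) (r : seq I) (R : pred I) (F : I -> 'M[C]_(2 ^ n)) :
  (forall i, R i -> inspan P (F i)) -> inspan P (\sum_(i <- r | R i) F i).
Proof. by move=> hF; apply: big_ind => //; [exact: inspan0 | exact: inspanD]. Qed.

Lemma inspan_ind P (Q : 'M[C]_(2 ^ n) -> Prop) :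
  Q 0 -> (forall A, P A -> Q A) -> (forall c A T, Q A -> Q T -> Q (c *: A + T)) ->
  forall T, inspan P T -> Q T.
Proof.
move=> Q0 QP QD T [s [hs ->]]; elim: s hs => [|p s IH] hs; first by rewrite big_nil.
rewrite big_cons; apply: QD; first by apply/QP/hs/mem_head.
by apply: IH => q hq; apply/hs; rewrite inE hq orbT.
Qed.

Lemma inspanU1 P T : inspan (fun A => P A \/ A = 1%:M) T ->
  exists c, inspan P (T - c *: 1%:M).
Proof.
move: T; apply: inspan_ind.
- by exists 0; rewrite scale0r subr0; exact: inspan0.
- move=> A [hA | ->]; first by exists 0; rewrite scale0r subr0; exact: inspan_gen.
  by exists 1; rewrite scale1r subrr; exact: inspan0.
- move=> c A T [a ha] [t ht]; exists (c * a + t).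
  rewrite scalerDl -scalerA opprD addrACA -scalerBr.
  by apply: inspanD => //; exact: inspanZ.
Qed.

Lemma mxtrace_Xfib (b : 'I_n -> 'M[C]_2) T : (forall i, in_sl2 (b i)) ->
  Xfib b T -> \tr T = 0.
Proof.
move=> hb; move: T; apply: inspan_ind => [|A|c A B]; first exact: mxtrace0.
- move=> [I [t [x [/set0Pn [i hi] _ _ hx ->]]]]; rewrite mxtrace_tens (bigD1 i) //=.
  move: (hx i hi); case: (t i) => [[-> _] | [c ->]]; first by rewrite mul0r.
  by rewrite mxtraceZ (hb i) mulr0 mul0r.
- by rewrite mxtraceD mxtraceZ => -> ->; rewrite mulr0 addr0.
Qed.

Lemma Xgen_embed (b : 'I_n -> 'M[C]_2) k : Xgen b (embed k (b k)).
Proof.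
exists [set k], (fun _ => false), (fun l => if l == k then b k else 1%:M); split=> //.
- by apply/set0Pn; exists k; rewrite inE.
- rewrite (_ : [set l in [set k] | false] = set0) ?cards0 //.
  by apply/setP => l; rewrite !inE andbF.
- by move=> l; rewrite inE => /negPf ->.
- by move=> l; rewrite inE => /eqP ->; rewrite eqxx; exists 1; rewrite scale1r.
Qed.

Lemma ptrace_Xgen (b : 'I_n -> 'M[C]_2) i T : (forall l, in_sl2 (b l)) ->
  Xgen b T -> exists c, ptrace i T = c *: b i.
Proof.
move=> hb [I [t [x [I0 even_t _ in_x ->]]]]; rewrite ptrace_tens.
have trx l : l \in I -> \tr (x l) = 0.
  move=> lI; move: (in_x l lI); case: (t l) => [[-> _] | [c ->]] //.
  by rewrite mxtraceZ (hb l) mulr0.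
have [l /andP [lI li] | onlyi] := pickP (fun l => (l \in I) && (l != i)).
  by exists 0; rewrite (bigD1 l) //= trx // mul0r !scale0r.
have iI : i \in I.
  case/set0Pn: I0 => l lI; have [<- // | li] := eqVneq l i.
  by move: (onlyi l); rewrite /= lI li.
have ti : t i = false.
  apply: negbTE; apply: contra even_t => ti.
  rewrite (_ : [set l in I | t l] = [set i]) ?cards1 //.
  apply/setP => l; rewrite !inE; have [-> | li] := eqVneq l i; first by rewrite iI ti.
  by move: (onlyi l); rewrite /= li andbT => ->.
move: (in_x i iI); rewrite ti => -[c ->].
by exists ((\prod_(l | l != i) \tr (x l)) * c); rewrite scalerA.
Qed.

Lemma ptrace_Xfib (b : 'I_n -> 'M[C]_2) i T : (forall l, in_sl2 (b l)) ->
  Xfib b T -> exists c, ptrace i T = c *: b i.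
Proof.
move=> hb; move: T.
apply: inspan_ind => [|T /(ptrace_Xgen i hb) // | c A T [a ha] [d hd]].
  by exists 0; rewrite linear0 scale0r.
by exists (c * a + d); rewrite linearD linearZ /= ha hd scalerDl scalerA.
Qed.

End Span.

Section Commutant.
Variables (C : numFieldType) (n : nat) (b : 'I_n -> 'M[C]_2).
Hypothesis b_Pbreve : forall i, Pbreve_rep (b i).

Let b_sl2 i : in_sl2 (b i). Proof. by case: (b_Pbreve i). Qed.
Let b_nondeg i : bform (b i) (b i) != 0. Proof. by case: (b_Pbreve i). Qed.
Let mu := \prod_i bform (b i) (b i).
Implicit Types (y : 'I_n -> 'M[C]_2) (t : {ffun 'I_n -> option bool}).

Definition frame_tens y t : 'M[C]_(2 ^ n) :=
  tens (fun i => frame_vec (b i) (y i) (t i)).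

Lemma tens_frame_decomp y : tens y = \sum_(t : {ffun 'I_n -> option bool})
  (\prod_i frame_coef (b i) (y i) (t i)) *: frame_tens y t.
Proof.
rewrite -[in LHS](eq_tens (fun i => frame_decomp (b i) (y i))) tens_sum.
by apply: eq_bigr => t _; rewrite tensZ.
Qed.

Lemma conj_frame_tens y t : tens b *m frame_tens y t *m tens b =
  ((-1) ^+ #|[pred i | t i == Some true]| * mu) *: frame_tens y t.
Proof.
rewrite !mul_tens.
rewrite (eq_tens (fun i => conj_frame_vec (y i) (t i) (b_sl2 i) (b_nondeg i))).
by rewrite tensZ big_split /= prodr_sign.
Qed.

Lemma frame_tens_Xgen y t : ~~ odd #|[pred i | t i == Some true]| ->
  Xgen b (frame_tens y t) \/ frame_tens y t = 1%:M.
Proof.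
move=> even_t; case: (pickP (fun i => t i != None)) => [i0 hi0 | none]; last first.
  right; rewrite -tens1; apply: eq_tens => i.
  by move: (none i) => /negbFE /eqP ->.
left; exists [set i | t i != None], (fun i => t i == Some true),
  (fun i => frame_vec (b i) (y i) (t i)); split=> //.
- by apply/set0Pn; exists i0; rewrite inE.
- rewrite (eq_card (B := [pred i | t i == Some true])) // => i.
  by rewrite !inE; case: (t i) => [[]|].
- by move=> i; rewrite inE negbK => /eqP ->.
- move=> i; rewrite inE; case: (t i) => [[]|] //= _; first exact: transv_partP.
  by exists 1; rewrite scale1r.
Qed.

(* As [tens b] squares to [mu], [conj_avg] is [2 mu] times the projection onto
   the commutant of [tens b]: it kills the frame tensors with an odd number of
   transversal factors and scales the others by [2 mu]. *)
Definition conj_avg (M : 'M[C]_(2 ^ n)) := mu *: M + tens b *m M *m tens b.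

Fact conj_avg_is_linear : linear conj_avg.
Proof.
move=> a M N; rewrite /conj_avg mulmxDr mulmxDl -scalemxAr -scalemxAl.
by rewrite scalerDr scalerA mulrC -scalerA addrACA -scalerDr.
Qed.
HB.instance Definition _ :=
  GRing.isLinear.Build C 'M[C]_(2 ^ n) 'M[C]_(2 ^ n) _ conj_avg conj_avg_is_linear.

Lemma inspan_conj_avg M : inspan (fun A => Xgen b A \/ A = 1%:M) (conj_avg M).
Proof.
rewrite (matrix_sum_delta M) !linear_sum; apply: inspan_sum => j _.
rewrite !linear_sum; apply: inspan_sum => k _; rewrite linearZ; apply: inspanZ.
rewrite -tens_delta tens_frame_decomp !linear_sum; apply: inspan_sum => t _.
rewrite linearZ; apply: inspanZ.
rewrite /= /conj_avg conj_frame_tens -scalerDl -signr_odd.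
case odd_t: (odd _).
  by rewrite expr1 mulN1r subrr scale0r; exact: inspan0.
by rewrite expr0 mul1r; apply/inspanZ/inspan_gen/frame_tens_Xgen; rewrite odd_t.
Qed.

Theorem Xfib_commutant T : \tr T = 0 -> T *m tens b = tens b *m T -> Xfib b T.
Proof.
move=> trT commT.
have mu_neq0 : mu != 0 by apply/prodf_neq0 => i _.
have avgT : conj_avg T = (2%:R * mu) *: T.
  rewrite /conj_avg -commT -mulmxA mul_tens.
  rewrite (eq_tens (fun i => sl2_sqr (b_sl2 i))) tensZ tens1 -scalemxAr mulmx1.
  by rewrite -scalerDl -/mu mulr_natl mulr2n.
have spanT : inspan (fun A => Xgen b A \/ A = 1%:M) T.
  have := inspanZ (2%:R * mu)^-1 (inspan_conj_avg T).
  by rewrite avgT scalerA mulVf ?scale1r // mulf_neq0 ?pnatr_eq0.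
have [c hc] := inspanU1 spanT.
have c0 : c = 0.
  move: (mxtrace_Xfib b_sl2 hc); rewrite linearB /= mxtraceZ mxtrace1 trT sub0r.
  by move/eqP; rewrite oppr_eq0 mulf_eq0 pnatr_eq0 expn_eq0 orbF => /eqP.
by move: hc; rewrite c0 scale0r subr0.
Qed.

End Commutant.

Section Bloch.
Variables (C : numFieldType) (n : nat).
Implicit Types (g : 'I_n -> 'M[C]_2) (A B : 'M[C]_(2 ^ n)).

Lemma mxtrace_bloch A : \tr (bloch A) = \tr A - 1.
Proof. by rewrite linearB /= mxtraceZ mxtrace1 mulVf // pnatr_eq0 expn_eq0. Qed.

Lemma bloch_tens_conj g A : (forall i, g i \in unitmx) ->
  bloch (tens_conj g A) = tens_conj g (bloch A).
Proof. by move=> hg; rewrite /bloch [in RHS]linearB [in RHS]linearZ /= tens_conj1. Qed.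

Lemma bloch_segment A B t :
  bloch (A + t *: (B - A)) = bloch A + t *: (bloch B - bloch A).
Proof. by rewrite /bloch opprB addrA subrK addrAC. Qed.

Definition marginal A (i : 'I_n) : 'M[C]_2 := ptrace i (bloch A).

Lemma marginal_tens_conj g A i : (forall l, g l \in unitmx) ->
  marginal (tens_conj g A) i = g i *m marginal A i *m invmx (g i).
Proof. by move=> hg; rewrite /marginal bloch_tens_conj // ptrace_tens_conj. Qed.

Lemma marginal_sl2 A i : \tr A = 1 -> in_sl2 (marginal A i).
Proof. by move=> trA; rewrite /in_sl2 mxtrace_ptrace mxtrace_bloch trA subrr. Qed.

End Bloch.

Section XStates.
Variables (C : numFieldType) (n : nat).
Implicit Types (g : 'I_n -> 'M[C]_2) (A D s : 'M[C]_(2 ^ n)) (u v : 'I_(2 ^ n)).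

Definition parity_block D := forall u v, parity u != parity v -> D u v = 0.

Lemma is_XstateP s : is_Xstate s <-> \tr s = 1 /\
  exists2 g, (forall i, g i \in unitmx) & exists2 D, parity_block D & s = tens_conj g D.
Proof.
split=> [[tr1 [g [hg hcol]]] | [tr1 [g hg [D hD eqs]]]].
  split=> //; exists g => //; set Gi := tens (fun i => invmx (g i)).
  exists (Gi *m s *m tens g); last first.
    rewrite /tens_conj !mulmxA (mul_tens_invmx hg) mul1mx.
    by rewrite -mulmxA (mul_tens_invmx hg) mulmx1.
  move=> u v huv; have [c hc] := hcol v.
  have -> : (Gi *m s *m tens g) u v = (Gi *m (s *m col v (tens g))) u 0.
    by rewrite colE !mulmxA -colE [RHS]mxE.
  rewrite hc mulmx_sumr summxE big1 // => k /eqP pk.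
  rewrite -scalemxAr mxE colE mulmxA (mul_invmx_tens hg) mul1mx mxE.
  by rewrite (_ : u == k = false) ?mulr0 //; apply: contraNF huv => /eqP ->; rewrite pk.
split=> //; exists g; split=> // j; exists (fun k => D k j).
rewrite eqs colE /tens_conj -!mulmxA [tens (fun i => invmx (g i)) *m _]mulmxA.
rewrite (mul_invmx_tens hg) mul1mx -colE mul_col_sum.
rewrite (bigID (fun k => parity k == parity j)) /= [X in _ + X]big1 ?addr0 // => k pk.
by rewrite hD ?scale0r.
Qed.

Lemma parity_bit_flip i (u v : 'I_(2 ^ n)) :
  (forall l, l != i -> bits u l = bits v l) -> bits u i != bits v i ->
  parity u != parity v.
Proof.
move=> same flip; rewrite /parity (bigD1 i) //= [X in _ != odd X](bigD1 i) //= !oddD.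
rewrite (eq_bigr (fun l => bit v l : nat)) => [|l /same]; last by rewrite !ffunE => ->.
move: flip; rewrite !ffunE.
by case: (ord2P (bit u i)) => ->; case: (ord2P (bit v i)) => -> //= _; case: odd.
Qed.

Lemma ptrace_parity_block i A (a a' : 'I_2) :
  parity_block A -> a != a' -> ptrace i A a a' = 0.
Proof.
move=> hA aa'; rewrite mxE /mxtrace big1 // => u _; rewrite mxE big1 // => v _.
rewrite embedE [delta_mx _ _ _ _]mxE.
have [l /andP [li luv] | same] := pickP (fun l => (l != i) && (bits v l != bits u l)).
  by rewrite (bigD1 l) //= mxE (negPf luv) mul0r !mulr0.
case: andP => [[/eqP vi /eqP ui] | _]; last by rewrite mul0r mulr0.
rewrite hA ?mul0r //; apply: (parity_bit_flip (i := i)) => [l li | ].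
  by apply/esym/eqP; move: (same l); rewrite li /= => /negbFE.
by rewrite ui vi.
Qed.

Definition parity_op : 'M[C]_(2 ^ n) := tens (fun _ => sigma_z C).

Lemma parity_opE u v : parity_op u v = (u == v)%:R * (-1) ^+ parity u.
Proof.
rewrite tensE; under eq_bigr do rewrite mxE.
rewrite big_split /= prod_eq_bits prodrXr /parity signr_odd.
by congr (_ * _ ^+ _); apply: eq_bigr => i _; rewrite ffunE.
Qed.

Lemma parity_block_comm D : parity_block D -> D *m parity_op = parity_op *m D.
Proof.
move=> hD; apply/matrixP => u v; rewrite !mxE.
rewrite (bigD1 v) //= big1 => [|w /negPf wv]; last by rewrite parity_opE wv mul0r mulr0.
rewrite (bigD1 u) //= [X in _ = _ + X]big1 => [|w]; last first.
  by rewrite eq_sym => /negPf uw; rewrite parity_opE uw !mul0r.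
rewrite !parity_opE !eqxx !mul1r !addr0.
have [->|puv] := eqVneq (parity u) (parity v); first exact: mulrC.
by rewrite hD ?mul0r ?mulr0.
Qed.

Lemma Xstate_marginal_comm s : is_Xstate s ->
  s *m tens (marginal s) = tens (marginal s) *m s.
Proof.
case/is_XstateP => tr1 [g hg [D hD eqs]]; subst s.
have bD : parity_block (bloch D).
  move=> u v puv; rewrite !mxE hD // sub0r.
  by rewrite (_ : u == v = false) ?mulr0 ?oppr0 //; apply: contraNF puv => /eqP ->.
pose d i := ptrace i (bloch D) ord0 ord0.
have margE i : marginal (tens_conj g D) i = g i *m (d i *: sigma_z C) *m invmx (g i).
  rewrite marginal_tens_conj // -diag_sl2 //.
  - exact: ptrace_parity_block.
  - exact: ptrace_parity_block.
  by rewrite mxtrace_ptrace mxtrace_bloch -(mxtrace_tens_conj hg) tr1 subrr.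
have -> : tens (marginal (tens_conj g D)) = tens_conj g ((\prod_i d i) *: parity_op).
  by rewrite (eq_tens margE) /parity_op -tensZ /tens_conj !mul_tens.
by rewrite !tens_conjM // -scalemxAr -scalemxAl parity_block_comm.
Qed.

End XStates.

Section LocalStates.
Variables (C : numFieldType) (n : nat).
Implicit Types (y : 'I_n -> 'M[C]_2) (A : 'M[C]_(2 ^ n)).

Definition marginal_norm A : C := \prod_i bform (marginal A i) (marginal A i).

Lemma marginal_norm_tens_conj g A : (forall i, g i \in unitmx) ->
  marginal_norm (tens_conj g A) = marginal_norm A.
Proof.
by move=> hg; apply: eq_bigr => i _; rewrite marginal_tens_conj // bform_conj.
Qed.

Definition local_state y : 'M[C]_(2 ^ n) :=
  (2 ^ n)%:R^-1 *: 1%:M + \sum_k embed k (y k).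

Lemma bloch_local_state y : bloch (local_state y) = \sum_k embed k (y k).
Proof. by rewrite /bloch addrAC subrr add0r. Qed.

Lemma mxtrace_local_state y : (forall k, in_sl2 (y k)) -> \tr (local_state y) = 1.
Proof.
move=> hy; rewrite -[local_state y](subrK ((2 ^ n)%:R^-1 *: 1%:M)) -/(bloch _).
rewrite bloch_local_state mxtraceD raddf_sum big1 ?add0r => [|k _].
  by rewrite mxtraceZ mxtrace1 mulVf // pnatr_eq0 expn_eq0.
by rewrite /= mxtrace_tens (bigD1 k) //= eqxx (hy k) mul0r.
Qed.

Lemma marginal_local_state y i : (forall k, in_sl2 (y k)) ->
  marginal (local_state y) i = (2 ^ n.-1)%:R *: y i.
Proof.
move=> hy; rewrite /marginal bloch_local_state linear_sum (bigD1 i) //=.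
rewrite (ptrace_embed _ _ (hy i)) eqxx big1 ?addr0 // => k /negPf ki.
by rewrite (ptrace_embed _ _ (hy k)) ki.
Qed.

Lemma marginal_norm_local_state y : (forall k, Pbreve_rep (y k)) ->
  marginal_norm (local_state y) != 0.
Proof.
move=> hy; have [hsl hnd] := (fun k => (hy k).1, fun k => (hy k).2).
apply/prodf_neq0 => i _; rewrite marginal_local_state // bformZZ.
by rewrite mulf_neq0 ?expf_neq0 ?pnatr_eq0 ?expn_eq0.
Qed.

Lemma local_state_parity_block y : (forall k, is_diag_mx (y k)) ->
  parity_block (local_state y).
Proof.
move=> hy u v puv; have uv : u != v by apply: contraNneq puv => ->.
rewrite !mxE summxE (negPf uv) mulr0 add0r big1 // => k _.
have /is_diag_mxP -> // : is_diag_mx (embed k (y k)).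
by apply: tens_is_diag => l; case: eqP => _; rewrite ?scalar_mx_is_diag.
Qed.

Lemma Xstate_segment s : is_Xstate s ->
  exists s0, marginal_norm s0 != 0 /\ forall t, is_Xstate (s + t *: (s0 - s)).
Proof.
case/is_XstateP => tr1 [g hg [D hD eqs]]; subst s.
pose D0 := local_state (fun _ : 'I_n => sigma_z C).
have sigma_z_Pbreve : Pbreve_rep (sigma_z C).
  by split; [exact: sigma_z_sl2 | rewrite bform_sigma_z oner_eq0].
have hD0 : parity_block D0.
  by apply: local_state_parity_block => _; exact: sigma_z_is_diag.
have trD0 : \tr D0 = 1 by apply: mxtrace_local_state => _; exact: sigma_z_sl2.
have nD0 : marginal_norm D0 != 0 by exact: marginal_norm_local_state.
clearbody D0; exists (tens_conj g D0); split; first by rewrite marginal_norm_tens_conj.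
move=> t; rewrite -linearB -linearZ -linearD; apply/is_XstateP; split.
  rewrite mxtrace_tens_conj // mxtraceD mxtraceZ linearB /= -(mxtrace_tens_conj hg).
  by rewrite tr1 trD0 subrr mulr0 addr0.
exists g => //; exists (D + t *: (D0 - D)) => // u v puv.
by rewrite !mxE hD // hD0 // subrr mulr0 addr0.
Qed.

Lemma in_E_segment b rho : in_E b rho ->
  exists rho0, marginal_norm rho0 != 0 /\ forall t, in_E b (rho + t *: (rho0 - rho)).
Proof.
case=> hb tr1 hX; have hsl k : in_sl2 (b k) by case: (hb k).
exists (local_state b); split=> [|t]; first exact: marginal_norm_local_state.
split=> //.
  by rewrite mxtraceD mxtraceZ linearB /= tr1 mxtrace_local_state // subrr mulr0 addr0.
rewrite bloch_segment; apply/inspanD/inspanZ/inspanD => //; last first.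
  by rewrite -scaleN1r; exact: inspanZ.
by rewrite bloch_local_state; apply: inspan_sum => k _; apply/inspan_gen/Xgen_embed.
Qed.

End LocalStates.

Section Segments.
Variable C : numFieldType.

Lemma meval_line N (p : {mpoly C[N]}) (a c : 'I_N -> C) :
  exists P : {poly C}, forall t, p.@[fun k => a k + t * c k] = P.[t].
Proof.
exists (mmap polyC (fun k => (a k)%:P + c k *: 'X) p) => t.
rewrite mevalE /mmap horner_sum; apply: eq_bigr => m _.
rewrite hornerM hornerC /mmap1 horner_prod; congr (_ * _); apply: eq_bigr => k _.
by rewrite horner_exp hornerD hornerC hornerZ hornerX mulrC.
Qed.

Lemma poly_eq0_off_roots (P Q : {poly C}) : Q != 0 ->
  (forall t, Q.[t] != 0 -> P.[t] = 0) -> P = 0.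
Proof.
move=> Q0 hPQ; suff /eqP : P * Q = 0 by rewrite mulf_eq0 (negPf Q0) orbF => /eqP.
apply: (@roots_geq_poly_eq0 _ _ [seq i%:R | i <- iota 0 (size (P * Q))]).
- apply/allP => _ /mapP [i _ ->]; rewrite /root hornerM.
  by have [-> | /hPQ ->] := eqVneq Q.[i%:R] 0; rewrite ?mulr0 ?mul0r.
- by rewrite map_inj_uniq ?iota_uniq //; exact: (mulrIn (@oner_neq0 C)).
- by rewrite size_map size_iota.
Qed.

Lemma meval_line_vanish N N' (f : {mpoly C[N]}) (q : {mpoly C[N']}) a c a' c' t1 :
  (forall t, q.@[fun k => a' k + t * c' k] != 0 -> f.@[fun k => a k + t * c k] = 0) ->
  q.@[fun k => a' k + t1 * c' k] != 0 -> forall t, f.@[fun k => a k + t * c k] = 0.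
Proof.
move=> hfq q1 t; have [P hP] := meval_line f a c; have [Q hQ] := meval_line q a' c'.
have Q0 : Q != 0 by apply: contraNneq q1 => Q0; rewrite hQ Q0 horner0.
suff P0 : P = 0 by rewrite hP P0 horner0.
by apply: poly_eq0_off_roots Q0 _ => t'; rewrite -hP -hQ; exact: hfq.
Qed.

Variable n : nat.
Implicit Types (s W : 'M[C]_(2 ^ n)) (p q f : {mpoly C[2 ^ n * 2 ^ n]}).

Lemma polyL_affine p s W t :
  polyL p (s + t *: W) = p.@[fun k => coordL s k + t * coordL W k].
Proof. by apply: meval_eq => k; rewrite /coordL linearD linearZ !mxE. Qed.

Lemma polyL_segment_vanish f q s (s0 : 'M[C]_(2 ^ n)) :
  (forall t, polyL q (s + t *: (s0 - s)) != 0 -> polyL f (s + t *: (s0 - s)) = 0) ->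
  polyL q s0 != 0 -> polyL f s = 0.
Proof.
move=> hfq q0; rewrite -[s]addr0 -(scale0r (s0 - s)) polyL_affine.
apply: (meval_line_vanish (a' := coordL s) (c' := coordL (s0 - s)) (t1 := 1)).
  by move=> t; rewrite -!polyL_affine; exact: hfq.
by rewrite -polyL_affine scale1r addrC subrK.
Qed.

Lemma polyE_segment_vanish (F : {mpoly C[n * (2 * 2) + 2 ^ n * 2 ^ n]}) q b s
    (s0 : 'M[C]_(2 ^ n)) :
  (forall t, polyL q (s + t *: (s0 - s)) != 0 -> polyE F b (s + t *: (s0 - s)) = 0) ->
  polyL q s0 != 0 -> polyE F b s = 0.
Proof.
pose W : 'rV[C]_(n * (2 * 2) + 2 ^ n * 2 ^ n) := row_mx 0 (mxvec (s0 - s)).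
have segE t : polyE F b (s + t *: (s0 - s)) = F.@[fun k => coordE b s k + t * W 0 k].
  apply: meval_eq => k; rewrite /coordE linearD linearZ /=.
  set B := mxvec (\matrix_(i < n) mxvec (b i)).
  have -> : row_mx B (mxvec s + t *: mxvec (s0 - s)) = row_mx B (mxvec s) + t *: W.
    by rewrite /W scale_row_mx scaler0 add_row_mx addr0.
  by rewrite !mxE.
move=> hfq q0; rewrite -[s]addr0 -(scale0r (s0 - s)) segE.
apply: (meval_line_vanish (a' := coordL s) (c' := coordL (s0 - s)) (t1 := 1)).
  by move=> t; rewrite -segE -polyL_affine; exact: hfq.
by rewrite -polyL_affine scale1r addrC subrK.
Qed.

End Segments.

Section PolynomialFunctions.
Variables (C : numFieldType) (n : nat).
Implicit Types (f h : 'M[C]_(2 ^ n) -> C) (rho : 'M[C]_(2 ^ n)).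

Definition is_polyL f := exists p, forall rho, f rho = polyL p rho.

Lemma is_polyL_ext f h : f =1 h -> is_polyL f -> is_polyL h.
Proof. by move=> e [p hp]; exists p => rho; rewrite -e. Qed.

Lemma is_polyL_const c : is_polyL (fun _ => c).
Proof. by exists c%:MP => rho; rewrite /polyL mevalC. Qed.

Lemma is_polyL_entry j k : is_polyL (fun rho => rho j k).
Proof.
by exists 'X_(mxvec_index j k) => rho; rewrite /polyL mevalXU /coordL mxvecE.
Qed.

Lemma is_polyL_add f h :
  is_polyL f -> is_polyL h -> is_polyL (fun rho => f rho + h rho).
Proof. by move=> [p hp] [r hr]; exists (p + r) => rho; rewrite /polyL mevalD hp hr. Qed.

Lemma is_polyL_sub f h :
  is_polyL f -> is_polyL h -> is_polyL (fun rho => f rho - h rho).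
Proof. by move=> [p hp] [r hr]; exists (p - r) => rho; rewrite /polyL mevalB hp hr. Qed.

Lemma is_polyL_mul f h :
  is_polyL f -> is_polyL h -> is_polyL (fun rho => f rho * h rho).
Proof. by move=> [p hp] [r hr]; exists (p * r) => rho; rewrite /polyL mevalM hp hr. Qed.

Lemma is_polyL_sum (I : Type) (r : seq I) (P : pred I) (F : I -> 'M[C]_(2 ^ n) -> C) :
  (forall i, is_polyL (F i)) -> is_polyL (fun rho => \sum_(i <- r | P i) F i rho).
Proof.
move=> hF; elim: r => [|i r IH].
  by apply: is_polyL_ext (is_polyL_const 0) => rho; rewrite big_nil.
case Pi: (P i); last by apply: is_polyL_ext IH => rho; rewrite big_cons Pi.
by apply: is_polyL_ext (is_polyL_add (hF i) IH) => rho; rewrite big_cons Pi.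
Qed.

Lemma is_polyL_prod (I : Type) (r : seq I) (P : pred I) (F : I -> 'M[C]_(2 ^ n) -> C) :
  (forall i, is_polyL (F i)) -> is_polyL (fun rho => \prod_(i <- r | P i) F i rho).
Proof.
move=> hF; elim: r => [|i r IH].
  by apply: is_polyL_ext (is_polyL_const 1) => rho; rewrite big_nil.
case Pi: (P i); last by apply: is_polyL_ext IH => rho; rewrite big_cons Pi.
by apply: is_polyL_ext (is_polyL_mul (hF i) IH) => rho; rewrite big_cons Pi.
Qed.

Lemma is_polyL_marginal i a a' : is_polyL (fun rho => marginal rho i a a').
Proof.
have bloch_entry u v : is_polyL (fun rho => bloch rho u v).
  apply: is_polyL_ext (is_polyL_sub (is_polyL_entry u v) (is_polyL_const _)) => rho.
  by rewrite [in RHS]mxE [in RHS]mxE.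
apply: (@is_polyL_ext (fun rho =>
    \sum_u \sum_v bloch rho u v * embed i (delta_mx a' a) v u)) => [rho|].
  by rewrite /marginal mxE; apply: eq_bigr => u _; rewrite mxE.
do 2!apply: is_polyL_sum => ?; apply: is_polyL_mul => //; exact: is_polyL_const.
Qed.

Lemma is_polyL_marginal_norm : is_polyL (@marginal_norm C n).
Proof.
apply: (@is_polyL_ext (fun rho => \prod_i
    ((\sum_a \sum_a' marginal rho i a a' * marginal rho i a' a) / 2%:R))) => [rho|].
  apply: eq_bigr => i _; rewrite /bform; congr (_ / _).
  by apply: eq_bigr => a _; rewrite mxE.
apply: is_polyL_prod => i; apply: is_polyL_mul; last exact: is_polyL_const.
by do 2!apply: is_polyL_sum => ?; apply: is_polyL_mul; exact: is_polyL_marginal.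
Qed.

Lemma in_X_polyL f rho : is_polyL f -> (forall s, is_Xstate s -> f s = 0) ->
  in_X rho -> f rho = 0.
Proof. by move=> [p hp] hf hX; rewrite hp; apply: hX => s /hf; rewrite hp. Qed.

Lemma in_X_trace rho : in_X rho -> \tr rho = 1.
Proof.
move=> hX; apply/eqP; rewrite -subr_eq0; apply/eqP.
apply: (@in_X_polyL (fun rho => \tr rho - 1)) hX => [|s [-> _]]; last exact: subrr.
apply: is_polyL_sub (is_polyL_const 1).
by apply: is_polyL_sum => j; exact: is_polyL_entry.
Qed.

Lemma in_X_marginal_comm rho : in_X rho ->
  rho *m tens (marginal rho) = tens (marginal rho) *m rho.
Proof.
move=> hX; apply/matrixP => j k; apply/eqP; rewrite -subr_eq0; apply/eqP.
apply: (@in_X_polyL (fun r =>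
    (r *m tens (marginal r)) j k - (tens (marginal r) *m r) j k)) hX
  => [|s /Xstate_marginal_comm ->]; last exact: subrr.
have tens_entry u v : is_polyL (fun r => tens (marginal r) u v).
  apply: (@is_polyL_ext (fun r => \prod_i marginal r i (bits u i) (bits v i))) => [r|].
    by rewrite tensE.
  by apply: is_polyL_prod => i; exact: is_polyL_marginal.
apply: is_polyL_sub.
  apply: (@is_polyL_ext (fun r => \sum_l r j l * tens (marginal r) l k)) => [r|].
    by rewrite mxE.
  by apply: is_polyL_sum => l; apply: is_polyL_mul => //; exact: is_polyL_entry.
apply: (@is_polyL_ext (fun r => \sum_l tens (marginal r) j l * r l k)) => [r|].
  by rewrite mxE.
by apply: is_polyL_sum => l; apply: is_polyL_mul => //; exact: is_polyL_entry.
Qed.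

End PolynomialFunctions.

Section Birationality.
Variables (C : numFieldType) (n : nat).
Implicit Types (b : 'I_n -> 'M[C]_2) (rho : 'M[C]_(2 ^ n)).

Lemma marginal_ratmap : exists (q : {mpoly C[2 ^ n * 2 ^ n]})
    (pb : 'I_n -> 'I_2 -> 'I_2 -> {mpoly C[2 ^ n * 2 ^ n]}),
  (forall rho, polyL q rho = marginal_norm rho) /\
  (forall rho, marginal_norm rho != 0 -> ratmap pb q rho = marginal rho).
Proof.
have [q hq] := is_polyL_marginal_norm C n.
have /fin_all_exists [pb hpb] (x : 'I_n * 'I_2 * 'I_2) :
    exists p : {mpoly C[2 ^ n * 2 ^ n]},
      forall rho, marginal rho x.1.1 x.1.2 x.2 * marginal_norm rho = polyL p rho.
  exact: is_polyL_mul (is_polyL_marginal _ _ _ _) (is_polyL_marginal_norm C n).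
exists q, (fun i a a' => pb (i, a, a')); split=> [rho | rho nz]; first by rewrite hq.
apply: boolp.funext => i; apply/matrixP => a a'.
by rewrite mxE -hpb -hq mulfK.
Qed.

Lemma X_dense (q f : {mpoly C[2 ^ n * 2 ^ n]}) :
  (forall rho, polyL q rho = marginal_norm rho) ->
  (forall rho, in_X rho -> polyL q rho != 0 -> polyL f rho = 0) ->
  forall rho, in_X rho -> polyL f rho = 0.
Proof.
move=> hq Hf rho hX; apply: hX => s hs; have [s0 [nz seg]] := Xstate_segment hs.
apply: (polyL_segment_vanish (q := q) (s0 := s0)) => [t qt|]; last by rewrite hq.
by apply: Hf qt => p hp; exact: hp _ (seg t).
Qed.

Lemma E_dense (q : {mpoly C[2 ^ n * 2 ^ n]})
    (F : {mpoly C[n * (2 * 2) + 2 ^ n * 2 ^ n]}) :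
  (forall rho, polyL q rho = marginal_norm rho) ->
  (forall b rho, in_E b rho -> polyL q rho != 0 -> polyE F b rho = 0) ->
  forall b rho, in_E b rho -> polyE F b rho = 0.
Proof.
move=> hq HF b rho hE; have [rho0 [nz seg]] := in_E_segment hE.
apply: (polyE_segment_vanish (q := q) (s0 := rho0)) => [t qt|]; last by rewrite hq.
exact: HF (seg t) qt.
Qed.

Lemma in_E_marginal rho : in_X rho -> marginal_norm rho != 0 ->
  in_E (marginal rho) rho.
Proof.
move=> hX /prodf_neq0 nz; have tr1 := in_X_trace hX.
have hb i : Pbreve_rep (marginal rho i) by split; [exact: marginal_sl2 | exact: nz].
split=> //; apply: Xfib_commutant => //; first by rewrite mxtrace_bloch tr1 subrr.
rewrite /bloch mulmxBl mulmxBr -scalemxAl -scalemxAr mul1mx mulmx1.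
by rewrite in_X_marginal_comm.
Qed.

Lemma marginal_collinear b rho i : in_E b rho -> marginal_norm rho != 0 ->
  exists c, c != 0 /\ b i = c *: marginal rho i.
Proof.
case=> hb _ hX /prodf_neq0 /(_ i isT) nz.
have [c hc] := ptrace_Xfib i (fun l => (hb l).1) hX.
have c0 : c != 0.
  apply: contraNneq nz => c0.
  by rewrite /marginal hc c0 scale0r /bform mulmx0 linear0 mul0r.
exists c^-1; split; first by rewrite invr_eq0.
by rewrite /marginal hc scalerA mulVf // scale1r.
Qed.

End Birationality.

Theorem corollary4p15 (R : realType) (n : nat) :
  exists (q : {mpoly R[i][2 ^ n * 2 ^ n]})
         (pb : 'I_n -> 'I_2 -> 'I_2 -> {mpoly R[i][2 ^ n * 2 ^ n]}),
  [/\ (* V = X /\ D(q) is dense in X *)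
      (forall f : {mpoly R[i][2 ^ n * 2 ^ n]},
         (forall rho, in_X rho -> polyL q rho != 0 -> polyL f rho = 0) ->
         forall rho, in_X rho -> polyL f rho = 0),
      (* U = pi^{-1}(D(q)) is dense in E *)
      (forall F : {mpoly R[i][n * (2 * 2) + 2 ^ n * 2 ^ n]},
         (forall b rho, in_E b rho -> polyL q rho != 0 -> polyE F b rho = 0) ->
         forall b rho, in_E b rho -> polyE F b rho = 0),
      (* the inverse maps V into E (and pi o inverse = id on V) *)
      (forall rho, in_X rho -> polyL q rho != 0 ->
         in_E (ratmap pb q rho) rho)
    & (* inverse o pi = id on U *)
      (forall b rho, in_E b rho -> polyL q rho != 0 ->
         forall i, exists c : R[i], c != 0 /\ b i = c *: ratmap pb q rho i)].
Proof.
have [q [pb [hq hpb]]] := marginal_ratmap R[i] n.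
exists q, pb; split.
- by move=> f; exact: X_dense.
- by move=> F; exact: E_dense.
- by move=> rho hX; rewrite hq => nz; rewrite hpb //; exact: in_E_marginal.
- by move=> b rho hE; rewrite hq => nz i; rewrite hpb //; exact: marginal_collinear.
Qed.
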